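(* Let $(X,d)$ be a $\delta$-Gromov hyperbolic space, $p\in X$, $\epsilon>0$, and $X^\epsilon=(X,d_\epsilon)$ the uniformized space. Suppose the canonical boundary map $\Phi:\partial_GX\to\partial_{d_\epsilon}X^\epsilon$ is bijective. Let $x\in\partial_{d_\epsilon}X^\epsilon$ and let $(x_n)$, $(y_n)\subseteq X$ both converge to $x$ with respect to $d_\epsilon$. Then any subsequence of $(x_n)$ that is a Gromov sequence and any subsequence of $(y_n)$ that is a Gromov sequence are equivalent Gromov sequences.
   Context: Gromov product $(x|y)_p=\frac12(d(p,x)+d(p,y)-d(x,y))$. $\delta$-Gromov hyperbolic: unbounded, proper, geodesic, and $(x|z)_p\ge\min\{(x|y)_p,(y|z)_p\}-\delta$ for all $x,y,z,p$. Uniformized metric: $d_\epsilon(x,y)=\inf_\gamma\int_\gamma e^{-\epsilon d(p,z)}ds(z)$ over $d$-rectifiable curves; $\partial_{d_\epsilon}X^\epsilon=\overline{X^\epsilon}\setminus X^\epsilon$ (closure in the completion). $\partial_GX$: geodesic rays from $p$ modulo $\gamma\sim\tilde\gamma$ iff $\sup_t d(\gamma(t),\tilde\gamma(t))<\infty$; $\Phi([\gamma])=\lim_{k\to\infty}\gamma(k)$ in $d_\epsilon$ (well defined). A Gromov sequence is $(x_n)$ with $(x_n|x_m)_p\to\infty$; Gromov sequences $(a_k),(b_k)$ are equivalent if $(a_k|b_k)_p\to\infty$. *)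

From Stdlib Require Import Reals Lra.
From Coquelicot Require Import Coquelicot.
Open Scope R_scope.

Section Hyp.
Variable X : Type.
Variable d : X -> X -> R.

Definition is_metric : Prop :=
  (forall x y, 0 <= d x y) /\ (forall x y, d x y = 0 <-> x = y) /\
  (forall x y, d x y = d y x) /\ (forall x y z, d x z <= d x y + d y z).

Definition open_set (U : X -> Prop) : Prop :=
  forall x, U x -> exists r, 0 < r /\ forall y, d x y < r -> U y.

Definition compact_set (K : X -> Prop) : Prop :=
  forall (I : Type) (U : I -> X -> Prop),
    (forall i, open_set (U i)) ->
    (forall x, K x -> exists i, U i x) ->
    exists l : list I, forall x, K x -> exists i, List.In i l /\ U i x.

Definition proper_space : Prop :=
  forall x r, compact_set (fun y => d x y <= r).

Definition unbounded_space : Prop :=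
  forall x M, exists y, M < d x y.

Definition geodesic_space : Prop :=
  forall x y, exists g : R -> X, g 0 = x /\ g (d x y) = y /\
    forall s t, 0 <= s <= d x y -> 0 <= t <= d x y -> d (g s) (g t) = Rabs (s - t).

Definition gprod (p x y : X) : R := (d p x + d p y - d x y) / 2.

Definition gromov_hyperbolic (delta : R) : Prop :=
  is_metric /\ unbounded_space /\ proper_space /\ geodesic_space /\
  forall x y z p, gprod p x z >= Rmin (gprod p x y) (gprod p y z) - delta.

Fixpoint poly_sum (g : R -> X) (t : nat -> R) (n : nat) : R :=
  match n with
  | O => 0
  | S k => poly_sum g t k + d (g (t k)) (g (t (S k)))
  end.

Definition curve_length (g : R -> X) (a b : R) : Rbar :=
  Lub_Rbar (fun v => exists (n : nat) (t : nat -> R),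
     t O = a /\ t n = b /\ (forall i, (i < n)%nat -> t i <= t (S i)) /\
     v = poly_sum g t n).

Definition arclength_param (g : R -> X) (L : R) : Prop :=
  0 <= L /\ forall s t, 0 <= s -> s <= t -> t <= L -> curve_length g s t = Finite (t - s).

(** Uniformized metric d_eps (base point p): infimum over rectifiable curves
    from x to y of the line integral of exp(-eps d(p,.)), the line integral
    being computed through the arc-length parametrization. *)
Definition d_eps (p : X) (eps : R) (x y : X) : R :=
  real (Glb_Rbar (fun v => exists (g : R -> X) (L : R),
     arclength_param g L /\ g 0 = x /\ g L = y /\
     v = RInt (fun t => exp (- eps * d p (g t))) 0 L)).

(** Completion of (X, d_eps): points of the completion are classes of
    d_eps-Cauchy sequences.  A boundary point (completion minus X) is
    represented by a d_eps-Cauchy sequence not converging in X. *)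
Definition eps_cauchy (p : X) (eps : R) (c : nat -> X) : Prop :=
  forall eta, 0 < eta -> exists N, forall n m, (N <= n)%nat -> (N <= m)%nat ->
     d_eps p eps (c n) (c m) < eta.

Definition eps_bdry_point (p : X) (eps : R) (c : nat -> X) : Prop :=
  eps_cauchy p eps c /\
  forall z : X, ~ is_lim_seq (fun n => d_eps p eps (c n) z) 0.

Definition compl_dist (p : X) (eps : R) (z : X) (c : nat -> X) : R :=
  real (Lim_seq (fun k => d_eps p eps z (c k))).

Definition conv_to (p : X) (eps : R) (xs : nat -> X) (c : nat -> X) : Prop :=
  is_lim_seq (fun n => compl_dist p eps (xs n) c) 0.

Definition geod_ray (p : X) (g : R -> X) : Prop :=
  g 0 = p /\ forall s t, 0 <= s -> 0 <= t -> d (g s) (g t) = Rabs (s - t).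

Definition ray_equiv (g g' : R -> X) : Prop :=
  exists M, forall t, 0 <= t -> d (g t) (g' t) <= M.

(** Phi([g]) = lim_k g(k) in d_eps. Phi : d_G X -> d_{d_eps} X^eps is bijective:
    injective on equivalence classes and surjective onto boundary points. *)
Definition Phi_bijective (p : X) (eps : R) : Prop :=
  (forall g g' c, geod_ray p g -> geod_ray p g' -> eps_bdry_point p eps c ->
     conv_to p eps (fun k => g (INR k)) c ->
     conv_to p eps (fun k => g' (INR k)) c -> ray_equiv g g') /\
  (forall c, eps_bdry_point p eps c ->
     exists g, geod_ray p g /\ conv_to p eps (fun k => g (INR k)) c).

Definition gromov_seq (p : X) (a : nat -> X) : Prop :=
  forall M, exists N, forall n m, (N <= n)%nat -> (N <= m)%nat -> M < gprod p (a n) (a m).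

Definition gromov_equiv (p : X) (a b : nat -> X) : Prop :=
  forall M, exists N, forall k, (N <= k)%nat -> M < gprod p (a k) (b k).

End Hyp.
Arguments gromov_hyperbolic {X}. Arguments Phi_bijective {X}. Arguments eps_bdry_point {X}. Arguments conv_to {X}. Arguments gromov_seq {X}. Arguments gromov_equiv {X}. Arguments d_eps {X}. Arguments gprod {X}. Arguments geod_ray {X}. Arguments ray_equiv {X}.

Definition strictly_incr (f : nat -> nat) : Prop := forall n, (f n < f (S n))%nat.

(* A Gromov sequence (a_n) determines a geodesic ray g from p with (a_n | g(k))_p -> oo:
   by properness, a diagonal extraction along the geodesics [p, a_m] yields points q_k with
   d(p, q_k) = k and d(q_k, q_(k+1)) <= 1, and unit geodesic segments join them into a ray;
   the delta-inequality passes the divergence of (a_n | a_m)_p on to (a_n | q_k)_p.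
   Integrating exp(-eps d(p, .)) along a geodesic [x, y] gives
   d_eps(x, y) <= (2 / eps) exp(-eps (x|y)_p), so g(k) converges in the completion to the
   same boundary point as (a_n).  Doing this for both sequences, injectivity of Phi puts the
   two rays at bounded distance, hence (g(k) | g'(k))_p >= k - C, and two more uses of the
   delta-inequality give (a_n | b_n)_p -> oo. *)

From Stdlib Require Import Reals Lra Lia ZArith Classical ClassicalEpsilon.
From Coquelicot Require Import Coquelicot.
Open Scope R_scope.

Section Metric.
Context {X : Type} {d : X -> X -> R} (Hm : is_metric X d).

Lemma d_ge0 x y : 0 <= d x y. Proof. apply Hm. Qed.
Lemma d_xx x : d x x = 0. Proof. now apply Hm. Qed.
Lemma d_eq0 x y : d x y = 0 -> x = y. Proof. apply Hm. Qed.
Lemma d_sym x y : d x y = d y x. Proof. apply Hm. Qed.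
Lemma d_tri x y z : d x z <= d x y + d y z. Proof. apply Hm. Qed.

Lemma d_rev_tri x y z : Rabs (d x y - d x z) <= d y z.
Proof.
  pose proof (d_tri x y z). pose proof (d_tri x z y). rewrite (d_sym z y) in *.
  apply Rabs_le. lra.
Qed.

Lemma gprod_sym p x y : gprod d p x y = gprod d p y x.
Proof. unfold gprod. rewrite (d_sym x y). field. Qed.

Lemma gprod_xx p x : gprod d p x x = d p x.
Proof. unfold gprod. rewrite d_xx. field. Qed.

Lemma gprod_lipschitz_r p x y y' : gprod d p x y' - d y y' <= gprod d p x y.
Proof.
  unfold gprod. pose proof (d_tri p y y'). pose proof (d_tri x y' y).
  rewrite (d_sym y' y) in *. lra.
Qed.

Lemma geodesic_gprod_le p x y (g : R -> X) :
  g 0 = x -> g (d x y) = y ->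
  (forall s t, 0 <= s <= d x y -> 0 <= t <= d x y -> d (g s) (g t) = Rabs (s - t)) ->
  forall t, 0 <= t <= d x y ->
    gprod d p x y + Rabs (t - (d x y + d p x - d p y) / 2) <= d p (g t).
Proof.
  intros Hgx Hgy Hiso t Ht. pose proof (d_tri p (g t) (g 0)) as Hx.
  pose proof (d_tri p (g t) (g (d x y))) as Hy.
  rewrite Hiso in Hx, Hy by lra. rewrite Hgx in Hx. rewrite Hgy in Hy.
  unfold gprod, Rabs in *. repeat destruct Rcase_abs; lra.
Qed.

End Metric.

Section CurveLength.
Context {X : Type} {d : X -> X -> R} (Hm : is_metric X d).

Definition partition (t : nat -> R) (n : nat) (a b : R) : Prop :=
  t O = a /\ t n = b /\ (forall i, (i < n)%nat -> t i <= t (S i)).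

Lemma partition_bounds t n a b :
  partition t n a b -> forall i, (i <= n)%nat -> a <= t i <= b.
Proof.
  intros [H0 [Hn Hmono]].
  assert (Hup : forall i j, (i <= j <= n)%nat -> t i <= t j).
  { intros i j [Hij Hjn]. induction Hij; [lra|].
    specialize (Hmono m ltac:(lia)). specialize (IHHij ltac:(lia)). lra. }
  intros i Hi. rewrite <- H0, <- Hn. split; apply Hup; lia.
Qed.

Lemma partition_shift t n a b c :
  partition t n a b -> partition (fun i => t i + c) n (a + c) (b + c).
Proof.
  intros [H0 [Hn Hmono]]. repeat split; try lra.
  intros i Hi. specialize (Hmono i Hi). lra.
Qed.

Definition partition_one (a b : R) (i : nat) : R := if Nat.eqb i 0 then a else b.

Lemma partition_oneP a b : a <= b -> partition (partition_one a b) 1 a b.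
Proof. intros Hab. repeat split. intros i Hi. replace i with O by lia. exact Hab. Qed.

Lemma poly_sum_one g a b : poly_sum X d g (partition_one a b) 1 = d (g a) (g b).
Proof. cbn. ring. Qed.

Lemma poly_sum_ext g g' t t' n :
  (forall i, (i <= n)%nat -> g (t i) = g' (t' i)) ->
  poly_sum X d g t n = poly_sum X d g' t' n.
Proof.
  induction n as [|n IH]; intros H; simpl; [reflexivity|].
  rewrite IH by (intros i Hi; apply H; lia).
  rewrite (H n), (H (S n)) by lia. reflexivity.
Qed.

Lemma poly_sum_le_lipschitz g t n a b :
  partition t n a b ->
  (forall u v, a <= u -> u <= v -> v <= b -> d (g u) (g v) <= v - u) ->
  poly_sum X d g t n <= b - a.
Proof.
  intros Hp Hlip. pose proof (partition_bounds _ _ _ _ Hp) as Hb.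
  destruct Hp as [H0 [Hn Hmono]].
  assert (Hk : forall k, (k <= n)%nat -> poly_sum X d g t k <= t k - a).
  { induction k as [|k IH]; intros Hk; simpl; [lra|].
    specialize (IH ltac:(lia)). specialize (Hmono k ltac:(lia)).
    pose proof (Hb k ltac:(lia)). pose proof (Hb (S k) Hk).
    pose proof (Hlip (t k) (t (S k)) ltac:(lra) ltac:(lra) ltac:(lra)). lra. }
  rewrite <- Hn. apply Hk. lia.
Qed.

Lemma poly_sum_concat g t1 n1 a m t2 n2 b :
  partition t1 n1 a m -> partition t2 n2 m b ->
  exists t, partition t (n1 + n2) a b /\
    poly_sum X d g t (n1 + n2) = poly_sum X d g t1 n1 + poly_sum X d g t2 n2.
Proof.
  intros [A1 [B1 C1]] [A2 [B2 C2]].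
  set (t := fun i => if Nat.leb i n1 then t1 i else t2 (i - n1)%nat).
  assert (Hleft : forall i, (i <= n1)%nat -> t i = t1 i).
  { intros i Hi. unfold t. now rewrite (proj2 (Nat.leb_le i n1) Hi). }
  assert (Hright : forall k, t (n1 + k)%nat = t2 k).
  { intros k. unfold t. destruct (Nat.leb_spec (n1 + k) n1).
    - replace k with O by lia. rewrite Nat.add_0_r. congruence.
    - f_equal. lia. }
  exists t. split.
  - repeat split.
    + now rewrite Hleft by lia.
    + now rewrite Hright.
    + intros i Hi. destruct (Nat.le_gt_cases n1 i).
      * replace i with (n1 + (i - n1))%nat by lia.
        replace (S (n1 + (i - n1))) with (n1 + S (i - n1))%nat by lia.
        rewrite !Hright. apply C2. lia.
      * rewrite !Hleft by lia. apply C1. lia.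
  - assert (Hk : forall k, poly_sum X d g t (n1 + k) =
                          poly_sum X d g t1 n1 + poly_sum X d g t2 k).
    { induction k as [|k IH]; simpl.
      - rewrite Nat.add_0_r, Rplus_0_r. apply poly_sum_ext. intros i Hi. now rewrite Hleft.
      - replace (n1 + S k)%nat with (S (n1 + k)) by lia. simpl.
        rewrite IH. replace (S (n1 + k)) with (n1 + S k)%nat by lia. rewrite !Hright. lra. }
    apply Hk.
Qed.

Lemma curve_length_eq g a b v :
  curve_length X d g a b = Finite v <->
  (forall n t, partition t n a b -> poly_sum X d g t n <= v) /\
  (forall e, 0 < e -> exists n t, partition t n a b /\ v - e < poly_sum X d g t n).
Proof.
  unfold curve_length, partition. split.
  - intros Hv. destruct (Lub_Rbar_correct (fun v => exists (n : nat) (t : nat -> R),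
      t O = a /\ t n = b /\ (forall i, (i < n)%nat -> t i <= t (S i)) /\
      v = poly_sum X d g t n)) as [Hub Hlub].
    rewrite Hv in Hub, Hlub. split.
    + intros n t Hp. apply (Hub (poly_sum X d g t n)). exists n, t. tauto.
    + intros e He. apply NNPP. intros Hno.
      assert (Hle : Rbar_le v (v - e)); [|simpl in Hle; lra].
      apply Hlub. intros x [n [t [H0 [Hn [Hmono ->]]]]]. simpl.
      apply Rnot_lt_le. intros Hlt. apply Hno. exists n, t. tauto.
  - intros [Hub Happ]. apply is_lub_Rbar_unique. split.
    + intros x [n [t [H0 [Hn [Hmono ->]]]]]. apply Hub. tauto.
    + intros [r| |] Hr; simpl; trivial.
      * apply Rnot_lt_le. intros Hlt.
        destruct (Happ (v - r) ltac:(lra)) as [n [t [Hp Hs]]].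
        assert (Hle : Rbar_le (poly_sum X d g t n) r) by (apply Hr; exists n, t; tauto).
        simpl in Hle. lra.
      * destruct (Happ 1 ltac:(lra)) as [n [t [Hp _]]].
        apply (Hr (poly_sum X d g t n)). exists n, t. tauto.
Qed.

Definition polygons_approach (g : R -> X) (a b : R) : Prop :=
  forall e, 0 < e -> exists n t, partition t n a b /\ b - a - e < poly_sum X d g t n.

Lemma arclength_paramP g L :
  arclength_param X d g L <->
  0 <= L /\
  (forall u v, 0 <= u -> u <= v -> v <= L -> d (g u) (g v) <= v - u) /\
  (forall s t, 0 <= s -> s <= t -> t <= L -> polygons_approach g s t).
Proof.
  split.
  - intros [HL Hlen]. split; [exact HL|split].
    + intros u v Hu Huv Hv. rewrite <- poly_sum_one.
      apply (proj1 (curve_length_eq g u v (v - u)) (Hlen u v Hu Huv Hv)).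
      now apply partition_oneP.
    + intros s t Hs Hst Ht.
      exact (proj2 (proj1 (curve_length_eq g s t (t - s)) (Hlen s t Hs Hst Ht))).
  - intros [HL [Hlip Happ]]. split; [exact HL|]. intros s t Hs Hst Ht.
    apply curve_length_eq. split.
    + intros n tt Hp. apply (poly_sum_le_lipschitz g tt n s t Hp).
      intros u v Hu Huv Hv. apply Hlip; lra.
    + now apply Happ.
Qed.

Lemma arclength_lipschitz g L u v :
  arclength_param X d g L -> 0 <= u <= L -> 0 <= v <= L -> d (g u) (g v) <= Rabs (u - v).
Proof.
  intros Hg Hu Hv. apply arclength_paramP in Hg as [_ [Hlip _]].
  destruct (Rle_dec u v).
  - rewrite Rabs_left1 by lra. pose proof (Hlip u v ltac:(lra) r ltac:(lra)). lra.
  - rewrite Rabs_right, (d_sym Hm) by lra. apply Hlip; lra.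
Qed.

Lemma polygons_approach_shift g g' a b c :
  (forall u, a <= u <= b -> g u = g' (u - c)) ->
  polygons_approach g' (a - c) (b - c) -> polygons_approach g a b.
Proof.
  intros Hgg Happ e He. destruct (Happ e He) as [n [t [Hp Hs]]].
  pose proof (partition_shift _ _ _ _ c Hp) as Hp'.
  replace (a - c + c) with a in Hp' by ring. replace (b - c + c) with b in Hp' by ring.
  exists n, (fun i => t i + c). split; [exact Hp'|].
  rewrite (poly_sum_ext g g' _ t).
  - lra.
  - intros i Hi. rewrite Hgg by (apply (partition_bounds _ _ _ _ Hp'); lia).
    f_equal. ring.
Qed.

Lemma polygons_approach_concat g a m b :
  polygons_approach g a m -> polygons_approach g m b -> polygons_approach g a b.
Proof.
  intros H1 H2 e He.
  destruct (H1 (e / 2) ltac:(lra)) as [n1 [t1 [Hp1 Hs1]]].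
  destruct (H2 (e / 2) ltac:(lra)) as [n2 [t2 [Hp2 Hs2]]].
  destruct (poly_sum_concat g _ _ _ _ _ _ _ Hp1 Hp2) as [t [Hp Hs]].
  exists (n1 + n2)%nat, t. split; [exact Hp|]. rewrite Hs. lra.
Qed.

Definition concat_curve (g1 g2 : R -> X) (L1 : R) (u : R) : X :=
  if Rle_dec u L1 then g1 u else g2 (u - L1).

Lemma arclength_concat g1 L1 g2 L2 :
  arclength_param X d g1 L1 -> arclength_param X d g2 L2 -> g1 L1 = g2 0 ->
  arclength_param X d (concat_curve g1 g2 L1) (L1 + L2).
Proof.
  intros Hg1 Hg2 Hjoin.
  apply arclength_paramP in Hg1 as [HL1 [Hlip1 Happ1]].
  apply arclength_paramP in Hg2 as [HL2 [Hlip2 Happ2]].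
  set (g := concat_curve g1 g2 L1).
  assert (Hleft : forall u, u <= L1 -> g u = g1 (u - 0)).
  { intros u Hu. unfold g, concat_curve. destruct (Rle_dec u L1); [|lra]. f_equal. ring. }
  assert (Hright : forall u, L1 <= u -> g u = g2 (u - L1)).
  { intros u Hu. unfold g, concat_curve. destruct (Rle_dec u L1); [|reflexivity].
    replace u with L1 by lra. rewrite Hjoin. f_equal. ring. }
  apply arclength_paramP. split; [lra|split].
  - intros u v Hu Huv Hv. destruct (Rle_dec v L1); [|destruct (Rle_dec L1 u)].
    + rewrite !Hleft by lra. rewrite !Rminus_0_r. apply Hlip1; lra.
    + rewrite !Hright by lra. replace (v - u) with (v - L1 - (u - L1)) by ring.
      apply Hlip2; lra.
    + rewrite Hleft, Hright by lra. rewrite Rminus_0_r.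
      pose proof (Hlip1 u L1 ltac:(lra) ltac:(lra) ltac:(lra)).
      pose proof (Hlip2 0 (v - L1) ltac:(lra) ltac:(lra) ltac:(lra)).
      pose proof (d_tri Hm (g1 u) (g1 L1) (g2 (v - L1))). rewrite Hjoin in *. lra.
  - assert (HA : forall s t, 0 <= s -> s <= t -> t <= L1 -> polygons_approach g s t).
    { intros s t Hs Hst Ht. apply (polygons_approach_shift g g1 s t 0).
      - intros u Hu. apply Hleft. lra.
      - rewrite !Rminus_0_r. apply Happ1; lra. }
    assert (HB : forall s t, L1 <= s -> s <= t -> t <= L1 + L2 -> polygons_approach g s t).
    { intros s t Hs Hst Ht. apply (polygons_approach_shift g g2 s t L1).
      - intros u Hu. apply Hright. lra.
      - apply Happ2; lra. }
    intros s t Hs Hst Ht. destruct (Rle_dec t L1); [now apply HA|].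
    destruct (Rle_dec L1 s); [now apply HB|].
    apply (polygons_approach_concat g s L1 t); [apply HA|apply HB]; lra.
Qed.

Lemma geodesic_arclength g L :
  0 <= L -> (forall s t, 0 <= s <= L -> 0 <= t <= L -> d (g s) (g t) = Rabs (s - t)) ->
  arclength_param X d g L.
Proof.
  intros HL Hg. apply arclength_paramP. split; [exact HL|split].
  - intros u v Hu Huv Hv. rewrite Hg, Rabs_left1 by lra. lra.
  - intros s t Hs Hst Ht e He. exists 1%nat, (partition_one s t).
    split; [now apply partition_oneP|].
    rewrite poly_sum_one, Hg, Rabs_left1 by lra. lra.
Qed.

End CurveLength.

Lemma Glb_Rbar_nonneg_spec (E : R -> Prop) :
  (exists v, E v) -> (forall v, E v -> 0 <= v) ->
  0 <= real (Glb_Rbar E) /\ (forall v, E v -> real (Glb_Rbar E) <= v) /\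
  (forall e, 0 < e -> exists v, E v /\ v < real (Glb_Rbar E) + e).
Proof.
  intros [v0 Hv0] Hpos. destruct (Glb_Rbar_correct E) as [Hlb Hglb].
  assert (H0 : Rbar_le 0 (Glb_Rbar E)) by (apply Hglb; intros x Hx; exact (Hpos x Hx)).
  pose proof (Hlb v0 Hv0) as Hv.
  destruct (Glb_Rbar E) as [r| |]; simpl in *; try contradiction.
  split; [exact H0|split; [exact Hlb|]].
  intros e He. apply NNPP. intros Hno.
  assert (Hle : Rbar_le (r + e) r); [|simpl in Hle; lra].
  apply Hglb. intros x Hx. simpl. apply Rnot_lt_le. intros Hlt. apply Hno. now exists x.
Qed.

Lemma exp_le x y : x <= y -> exp x <= exp y.
Proof. intros [Hlt|Heq]; [left; now apply exp_increasing|right; now rewrite Heq]. Qed.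

Lemma is_RInt_exp_affine k c a b :
  k <> 0 -> is_RInt (fun t => exp (k * t + c)) a b ((exp (k * b + c) - exp (k * a + c)) / k).
Proof.
  intros Hk.
  assert (E : (exp (k * b + c) - exp (k * a + c)) / k =
             minus (exp (k * b + c) / k) (exp (k * a + c) / k)).
  { change (minus ?u ?v) with (u - v). field. exact Hk. }
  rewrite E.
  apply (is_RInt_derive (fun t => exp (k * t + c) / k)).
  - intros x _. auto_derive; auto. field. exact Hk.
  - intros x _. apply (ex_derive_continuous (fun t => exp (k * t + c))). auto_derive. easy.
Qed.

Lemma lipschitz_continuous (f : R -> R) z :
  (forall u v, Rabs (f u - f v) <= Rabs (u - v)) -> continuous f z.
Proof.
  intros H. apply continuity_pt_filterlim. intros e He. exists e. split; [exact He|].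
  intros x [_ Hx]. simpl in *. unfold R_dist in *. eapply Rle_lt_trans; [apply H|exact Hx].
Qed.

Section Uniformized.
Context {X : Type} {d : X -> X -> R} (Hm : is_metric X d) (p : X) (eps : R).

Definition weight (g : R -> X) (t : R) : R := exp (- eps * d p (g t)).

Lemma ex_RInt_weight g L : arclength_param X d g L -> ex_RInt (weight g) 0 L.
Proof.
  intros Hg. assert (HL : 0 <= L) by apply Hg.
  (* clamping to [0, L] makes the integrand continuous on all of R *)
  set (cl := fun t => Rmax 0 (Rmin t L)).
  assert (Hcl : forall t, 0 <= cl t <= L).
  { intros t. unfold cl, Rmax, Rmin. repeat destruct Rle_dec; lra. }
  assert (Hcl_lip : forall u v, Rabs (cl u - cl v) <= Rabs (u - v)).
  { intros u v. unfold cl, Rmax, Rmin.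
    repeat destruct Rle_dec; unfold Rabs; repeat destruct Rcase_abs; lra. }
  apply ex_RInt_ext with (f := fun t => weight g (cl t)).
  - intros x Hx. rewrite Rmin_left, Rmax_right in Hx by lra. unfold cl.
    now rewrite Rmin_left, Rmax_right by lra.
  - apply (ex_RInt_continuous (V := R_CompleteNormedModule)). intros z _.
    apply continuous_comp with (f := fun t => d p (g (cl t))) (g := fun y => exp (- eps * y)).
    + apply lipschitz_continuous. intros u v.
      eapply Rle_trans; [apply (d_rev_tri Hm)|].
      eapply Rle_trans; [apply (arclength_lipschitz Hm g L); auto|]. apply Hcl_lip.
    + apply (ex_derive_continuous (fun y => exp (- eps * y))). auto_derive. easy.
Qed.

Lemma RInt_weight_ge0 g L : arclength_param X d g L -> 0 <= RInt (weight g) 0 L.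
Proof.
  intros Hg. apply RInt_ge_0; [apply Hg|apply (ex_RInt_weight g L Hg)|].
  intros x _. left. apply exp_pos.
Qed.

Lemma RInt_weight_concat g1 L1 g2 L2 :
  arclength_param X d g1 L1 -> arclength_param X d g2 L2 -> g1 L1 = g2 0 ->
  RInt (weight (concat_curve g1 g2 L1)) 0 (L1 + L2) =
  RInt (weight g1) 0 L1 + RInt (weight g2) 0 L2.
Proof.
  intros Hg1 Hg2 Hjoin.
  assert (HL1 : 0 <= L1) by apply Hg1. assert (HL2 : 0 <= L2) by apply Hg2.
  pose proof (ex_RInt_weight _ _ (arclength_concat Hm _ _ _ _ Hg1 Hg2 Hjoin)) as Hex.
  rewrite <- (RInt_Chasles _ 0 L1 (L1 + L2)).
  2: apply ex_RInt_Chasles_1 with (L1 + L2); [lra|exact Hex].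
  2: apply ex_RInt_Chasles_2 with 0; [lra|exact Hex].
  change (plus ?a ?b) with (a + b). f_equal.
  - apply RInt_ext. intros x Hx. rewrite Rmin_left, Rmax_right in Hx by lra.
    unfold weight, concat_curve. destruct (Rle_dec x L1); [reflexivity|lra].
  - assert (Hex2 : ex_RInt (weight g2) (1 * L1 + - L1) (1 * (L1 + L2) + - L1)).
    { replace (1 * L1 + - L1) with 0 by ring. replace (1 * (L1 + L2) + - L1) with L2 by ring.
      exact (ex_RInt_weight _ _ Hg2). }
    pose proof (RInt_comp_lin (weight g2) 1 (- L1) L1 (L1 + L2) Hex2) as Hlin.
    replace (1 * L1 + - L1) with 0 in Hlin by ring.
    replace (1 * (L1 + L2) + - L1) with L2 in Hlin by ring.
    rewrite <- Hlin. apply RInt_ext. intros x Hx. rewrite Rmin_left, Rmax_right in Hx by lra.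
    change (scal 1 ?z) with (1 * z). unfold weight, concat_curve.
    destruct (Rle_dec x L1); [lra|]. rewrite Rmult_1_l. do 4 f_equal. ring.
Qed.

Definition weighted_lengths (x y : X) (v : R) : Prop :=
  exists g L, arclength_param X d g L /\ g 0 = x /\ g L = y /\ v = RInt (weight g) 0 L.

Hypothesis Hgeo : geodesic_space X d.

Lemma geodesic_segment x y : exists g, g 0 = x /\ g (d x y) = y /\
  arclength_param X d g (d x y) /\
  (forall s t, 0 <= s <= d x y -> 0 <= t <= d x y -> d (g s) (g t) = Rabs (s - t)).
Proof.
  destruct (Hgeo x y) as [g [H0 [H1 Hiso]]]. exists g. repeat split; auto.
  - apply (d_ge0 Hm).
  - apply geodesic_arclength; [apply (d_ge0 Hm)|exact Hiso].
Qed.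

Lemma d_eps_spec x y :
  0 <= d_eps d p eps x y /\
  (forall v, weighted_lengths x y v -> d_eps d p eps x y <= v) /\
  (forall e, 0 < e -> exists v, weighted_lengths x y v /\ v < d_eps d p eps x y + e).
Proof.
  apply Glb_Rbar_nonneg_spec.
  - destruct (geodesic_segment x y) as [g [H0 [H1 [Hg _]]]].
    exists (RInt (weight g) 0 (d x y)), g, (d x y). easy.
  - intros v (g & L & Hg & _ & _ & Hv). rewrite Hv. exact (RInt_weight_ge0 g L Hg).
Qed.

Lemma d_eps_ge0 x y : 0 <= d_eps d p eps x y.
Proof. apply d_eps_spec. Qed.

Lemma d_eps_tri x y z : d_eps d p eps x z <= d_eps d p eps x y + d_eps d p eps y z.
Proof.
  apply Rnot_lt_le. intros Hlt.
  set (e := d_eps d p eps x z - (d_eps d p eps x y + d_eps d p eps y z)).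
  destruct (proj2 (proj2 (d_eps_spec x y)) (e / 2) ltac:(unfold e; lra))
    as [v1 [[g1 [L1 [Hg1 [A1 [B1 ->]]]]] H1]].
  destruct (proj2 (proj2 (d_eps_spec y z)) (e / 2) ltac:(unfold e; lra))
    as [v2 [[g2 [L2 [Hg2 [A2 [B2 ->]]]]] H2]].
  assert (HL1 : 0 <= L1) by apply Hg1. assert (HL2 : 0 <= L2) by apply Hg2.
  assert (Hjoin : g1 L1 = g2 0) by congruence.
  assert (Hxz : weighted_lengths x z (RInt (weight g1) 0 L1 + RInt (weight g2) 0 L2)).
  { exists (concat_curve g1 g2 L1), (L1 + L2).
    split; [exact (arclength_concat Hm _ _ _ _ Hg1 Hg2 Hjoin)|].
    split; [unfold concat_curve; destruct (Rle_dec 0 L1); [exact A1|lra]|].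
    split; [|symmetry; exact (RInt_weight_concat _ _ _ _ Hg1 Hg2 Hjoin)].
    unfold concat_curve. destruct (Rle_dec (L1 + L2) L1).
    - replace L2 with 0 in * by lra. rewrite Rplus_0_r. congruence.
    - rewrite <- B2. f_equal. ring. }
  pose proof (proj1 (proj2 (d_eps_spec x z)) _ Hxz). unfold e in *. lra.
Qed.

Lemma RInt_exp_increasing_le k c a b :
  0 < k -> a <= b -> RInt (fun t => exp (k * t + c)) a b <= exp (k * b + c) / k.
Proof.
  intros Hk Hab. rewrite (is_RInt_unique _ _ _ _ (is_RInt_exp_affine k c a b ltac:(lra))).
  pose proof (exp_pos (k * a + c)). unfold Rdiv.
  apply Rmult_le_compat_r; [left; apply Rinv_0_lt_compat, Hk|lra].
Qed.

Lemma RInt_exp_decreasing_le k c a b :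
  0 < k -> a <= b -> RInt (fun t => exp (- k * t + c)) a b <= exp (- k * a + c) / k.
Proof.
  intros Hk Hab. rewrite (is_RInt_unique _ _ _ _ (is_RInt_exp_affine (- k) c a b ltac:(lra))).
  pose proof (exp_pos (- k * b + c)).
  replace ((exp (- k * b + c) - exp (- k * a + c)) / - k)
    with ((exp (- k * a + c) - exp (- k * b + c)) / k) by (field; lra).
  unfold Rdiv. apply Rmult_le_compat_r; [left; apply Rinv_0_lt_compat, Hk|lra].
Qed.

Lemma d_eps_le_gprod x y :
  0 < eps -> d_eps d p eps x y <= 2 / eps * exp (- eps * gprod d p x y).
Proof.
  intros Heps. destruct (geodesic_segment x y) as [g [Hgx [Hgy [Hg Hiso]]]].
  pose proof (geodesic_gprod_le Hm p x y g Hgx Hgy Hiso) as Hfar.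
  pose proof (d_rev_tri Hm p x y) as Hxy. apply Rabs_le_between in Hxy.
  (* t0 = (p|y)_x: the weight decays exponentially on both sides of g t0 *)
  set (t0 := (d x y + d p x - d p y) / 2) in *.
  set (L := d x y) in *. set (P := gprod d p x y) in *.
  assert (Ht0 : 0 <= t0 <= L) by (unfold t0; lra).
  eapply Rle_trans.
  { apply (proj1 (proj2 (d_eps_spec x y))). exists g, L. easy. }
  pose proof (ex_RInt_weight g L Hg) as Hex.
  rewrite <- (RInt_Chasles _ 0 t0 L).
  2: apply ex_RInt_Chasles_1 with L; [lra|exact Hex].
  2: apply ex_RInt_Chasles_2 with 0; [lra|exact Hex].
  change (plus ?u ?v) with (u + v).
  assert (Hleft : RInt (weight g) 0 t0 <= exp (- eps * P) / eps).
  { replace (- eps * P) with (eps * t0 + (- eps * t0 - eps * P)) by ring.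
    eapply Rle_trans; [|apply (RInt_exp_increasing_le eps _ 0 t0); lra].
    apply RInt_le; [lra| |eexists; apply is_RInt_exp_affine; lra|].
    - apply (ex_RInt_Chasles_1 (V := R_CompleteNormedModule)) with L; [lra|exact Hex].
    - intros t Ht. unfold weight. apply exp_le.
      pose proof (Hfar t ltac:(lra)) as Ht'. rewrite Rabs_left1 in Ht' by lra. nra. }
  assert (Hright : RInt (weight g) t0 L <= exp (- eps * P) / eps).
  { replace (- eps * P) with (- eps * t0 + (eps * t0 - eps * P)) by ring.
    eapply Rle_trans; [|apply (RInt_exp_decreasing_le eps _ t0 L); lra].
    apply RInt_le; [lra| |eexists; apply is_RInt_exp_affine; lra|].
    - apply (ex_RInt_Chasles_2 (V := R_CompleteNormedModule)) with 0; [lra|exact Hex].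
    - intros t Ht. unfold weight. apply exp_le.
      pose proof (Hfar t ltac:(lra)) as Ht'. rewrite Rabs_right in Ht' by lra. nra. }
  replace (2 / eps * exp (- eps * P)) with (exp (- eps * P) / eps + exp (- eps * P) / eps)
    by (field; lra).
  lra.
Qed.

End Uniformized.

Lemma exp_decay_lt eps e :
  0 < eps -> 0 < e -> exists M, forall x, M < x -> 2 / eps * exp (- eps * x) < e.
Proof.
  intros Heps He. exists (- ln (e * eps / 2) / eps). intros x Hx.
  assert (Hpos : 0 < e * eps / 2) by (apply Rmult_lt_0_compat; [apply Rmult_lt_0_compat|]; lra).
  assert (Hlt : exp (- eps * x) < e * eps / 2).
  { rewrite <- (exp_ln _ Hpos). apply exp_increasing.
    apply (Rmult_lt_compat_l eps) in Hx; [|exact Heps].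
    replace (eps * (- ln (e * eps / 2) / eps)) with (- ln (e * eps / 2)) in Hx by (field; lra).
    lra. }
  assert (H2eps : 0 < 2 / eps)
    by (unfold Rdiv; apply Rmult_lt_0_compat; [lra|now apply Rinv_0_lt_compat]).
  apply (Rmult_lt_compat_l (2 / eps)) in Hlt; [|exact H2eps].
  replace (2 / eps * (e * eps / 2)) with e in Hlt by (field; lra). exact Hlt.
Qed.

Definition gprod_to_infty {X : Type} (d : X -> X -> R) (p : X) (a b : nat -> X) : Prop :=
  forall M, exists N, forall n k, (N <= n)%nat -> (N <= k)%nat -> M < gprod d p (a n) (b k).

Section Completion.
Context {X : Type} {d : X -> X -> R} (Hm : is_metric X d) (Hgeo : geodesic_space X d).
Variables (p : X) (eps : R).

Lemma compl_dist_lim z c : eps_cauchy X d p eps c ->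
  is_lim_seq (fun k => d_eps d p eps z (c k)) (compl_dist X d p eps z c).
Proof.
  intros Hc. assert (Hex : ex_finite_lim_seq (fun k => d_eps d p eps z (c k))).
  { apply ex_lim_seq_cauchy_corr. intros e. destruct (Hc e (cond_pos e)) as [N HN].
    exists N. intros n m Hn Hm'.
    pose proof (HN n m Hn Hm'). pose proof (HN m n Hm' Hn).
    pose proof (d_eps_tri Hm p eps Hgeo z (c m) (c n)).
    pose proof (d_eps_tri Hm p eps Hgeo z (c n) (c m)).
    apply Rabs_lt_between. lra. }
  destruct Hex as [l Hl]. unfold compl_dist. now rewrite (is_lim_seq_unique _ _ Hl).
Qed.

Lemma compl_dist_ge0 z c : eps_cauchy X d p eps c -> 0 <= compl_dist X d p eps z c.
Proof.
  intros Hc. apply (is_lim_seq_le (fun _ => 0) _ 0 _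
    (fun k => d_eps_ge0 Hm p eps Hgeo z (c k)) (is_lim_seq_const 0) (compl_dist_lim z c Hc)).
Qed.

Lemma compl_dist_tri z w c : eps_cauchy X d p eps c ->
  compl_dist X d p eps z c <= d_eps d p eps z w + compl_dist X d p eps w c.
Proof.
  intros Hc. apply (is_lim_seq_le _ (fun k => d_eps d p eps z w + d_eps d p eps w (c k))
    _ (d_eps d p eps z w + compl_dist X d p eps w c)
    (fun k => d_eps_tri Hm p eps Hgeo z w (c k)) (compl_dist_lim z c Hc)).
  apply (is_lim_seq_plus' _ _ _ _ (is_lim_seq_const _) (compl_dist_lim w c Hc)).
Qed.

Lemma conv_to_gprod_to_infty c a z :
  0 < eps -> eps_cauchy X d p eps c -> conv_to d p eps a c ->
  gprod_to_infty d p a z -> conv_to d p eps z c.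
Proof.
  intros Heps Hc Ha Haz. apply is_lim_seq_spec. intros e. pose proof (cond_pos e) as He.
  destruct (exp_decay_lt eps (e / 2) Heps ltac:(lra)) as [M HM].
  destruct (Haz M) as [N HN].
  apply is_lim_seq_spec in Ha. destruct (Ha (pos_div_2 e)) as [N' HN']. simpl in HN'.
  set (n := Nat.max N N'). specialize (HN' n ltac:(lia)).
  exists N. intros k Hk.
  pose proof (compl_dist_tri (z k) (a n) c Hc).
  pose proof (compl_dist_ge0 (z k) c Hc). pose proof (compl_dist_ge0 (a n) c Hc).
  pose proof (d_eps_le_gprod Hm p eps Hgeo (z k) (a n) Heps) as Hbound.
  rewrite (gprod_sym Hm) in Hbound. specialize (HM _ (HN n k ltac:(lia) Hk)).
  rewrite Rminus_0_r in *. rewrite Rabs_right in * by lra. lra.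
Qed.

End Completion.

Lemma nat_above r : exists n : nat, r < INR n.
Proof.
  destruct (nfloor_ex (Rmax 0 r) (Rmax_l 0 r)) as [n Hn]. exists (S n).
  rewrite S_INR. pose proof (Rmax_r 0 r). lra.
Qed.

Lemma Rinv_INR_S_gt0 i : 0 < / INR (S i).
Proof. apply Rinv_0_lt_compat, lt_0_INR. lia. Qed.

Lemma Rinv_INR_S_le i j : (i <= j)%nat -> / INR (S j) <= / INR (S i).
Proof. intros Hij. apply Rinv_le_contravar; [apply lt_0_INR; lia|apply le_INR; lia]. Qed.

Lemma le_0_of_le_Rinv_INR_S x N : (forall i, (N <= i)%nat -> x <= / INR (S i)) -> x <= 0.
Proof.
  intros H. apply Rnot_lt_le. intros Hx.
  destruct (nat_above (/ x)) as [n Hn].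
  assert (Hlt : / x < INR (S (N + n))).
  { rewrite S_INR, plus_INR. pose proof (pos_INR N). lra. }
  apply Rinv_0_lt_contravar in Hlt; [|now apply Rinv_0_lt_compat].
  rewrite Rinv_inv in Hlt. pose proof (H (N + n)%nat ltac:(lia)). lra.
Qed.

Lemma strictly_incr_lt f : strictly_incr f -> forall i j, (i < j)%nat -> (f i < f j)%nat.
Proof. intros Hf i j Hij. induction Hij; [apply Hf|]. specialize (Hf m). lia. Qed.

Lemma strictly_incr_ge f : strictly_incr f -> forall i, (i <= f i)%nat.
Proof. intros Hf i. induction i as [|i IH]; [lia|]. specialize (Hf i). lia. Qed.

Lemma strictly_incr_comp f g :
  strictly_incr f -> strictly_incr g -> strictly_incr (fun i => f (g i)).
Proof. intros Hf Hg i. apply (strictly_incr_lt f Hf), Hg. Qed.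

Lemma strictly_incr_extract (P : nat -> nat -> Prop) :
  (forall N k, exists i, (N <= i)%nat /\ P k i) ->
  exists rho, strictly_incr rho /\ forall k, P k (rho k).
Proof.
  intros H.
  set (pick := fun N k => proj1_sig (constructive_indefinite_description _ (H N k))).
  assert (Hpick : forall N k, (N <= pick N k)%nat /\ P k (pick N k)).
  { intros N k. unfold pick. now destruct (constructive_indefinite_description _ (H N k)). }
  exists (fix rho k := match k with O => pick O O | S k' => pick (S (rho k')) (S k') end).
  split.
  - intros i. apply Hpick.
  - intros [|k]; apply Hpick.
Qed.

Section SequentialCompactness.
Context {X : Type} {d : X -> X -> R} (Hm : is_metric X d).

Lemma compact_cluster_point (K : X -> Prop) (u : nat -> X) :
  compact_set X d K -> (forall n, K (u n)) ->
  exists q, forall r, 0 < r -> forall N, exists i, (N <= i)%nat /\ d (u i) q < r.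
Proof.
  intros HK Hu. apply NNPP. intros Hno.
  (* cover K by the balls B(x, r) which u avoids from some index N on *)
  set (I := {t : X * R * nat | 0 < snd (fst t) /\
              forall i, (snd t <= i)%nat -> snd (fst t) <= d (u i) (fst (fst t))}).
  set (B := fun (t : I) x => d (fst (fst (proj1_sig t))) x < snd (fst (proj1_sig t))).
  destruct (HK I B) as [l Hl].
  - intros [[[x r] N] [Hr HN]] y Hy. unfold B in *; simpl in *.
    exists (r - d x y). split; [lra|]. intros z Hz. pose proof (d_tri Hm x y z). lra.
  - intros x Kx. apply NNPP. intros Hnx. apply Hno. exists x.
    intros r Hr N. apply NNPP. intros HnN. apply Hnx.
    assert (Havoid : 0 < r /\ forall i, (N <= i)%nat -> r <= d (u i) x).
    { split; [exact Hr|]. intros i Hi. apply Rnot_lt_le. intros Hlt. apply HnN. now exists i. }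
    exists (exist _ (x, r, N) Havoid). unfold B; simpl. now rewrite (d_xx Hm).
  - set (Nmax := List.fold_right (fun (t : I) acc => Nat.max (snd (proj1_sig t)) acc) O l).
    assert (HNmax : forall t, List.In t l -> (snd (proj1_sig t) <= Nmax)%nat).
    { unfold Nmax. clear. induction l as [|t0 l IH]; simpl; [tauto|].
      intros t [->|Ht]; [lia|]. specialize (IH t Ht). lia. }
    destruct (Hl (u Nmax) (Hu Nmax)) as [[[[x r] N] [Hr HN]] [Hin HB]].
    specialize (HNmax _ Hin). unfold B in HB. simpl in HB, HNmax.
    pose proof (HN Nmax HNmax) as Hfar. simpl in Hfar. rewrite (d_sym Hm) in HB. lra.
Qed.

Lemma proper_bounded_subseq p r (u : nat -> X) :
  proper_space X d -> (forall n, d p (u n) <= r) ->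
  exists q rho, strictly_incr rho /\ forall i, d (u (rho i)) q < / INR (S i).
Proof.
  intros Hprop Hu.
  destruct (compact_cluster_point (fun y => d p y <= r) u (Hprop p r) Hu) as [q Hq].
  destruct (strictly_incr_extract (fun k i => d (u i) q < / INR (S k))) as [rho Hrho].
  - intros N k. apply Hq, Rinv_INR_S_gt0.
  - now exists q, rho.
Qed.

End SequentialCompactness.

Section Diagonal.
Context {X : Type} {d : X -> X -> R} (Hm : is_metric X d) (Hprop : proper_space X d).
Variables (p : X) (u : nat -> nat -> X) (r : nat -> R).
Hypothesis Hu : forall m k, d p (u m k) <= r k.

Lemma refine_subseq_ex (theta : nat -> nat) (k : nat) :
  exists qrho : X * (nat -> nat), strictly_incr (snd qrho) /\
    forall i, d (u (theta (snd qrho i)) k) (fst qrho) < / INR (S i).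
Proof.
  destruct (proper_bounded_subseq Hm p (r k) (fun m => u (theta m) k) Hprop)
    as [q [rho Hrho]]; [intros n; apply Hu|].
  now exists (q, rho).
Qed.

Definition refine_subseq theta k : X * (nat -> nat) :=
  proj1_sig (constructive_indefinite_description _ (refine_subseq_ex theta k)).

Lemma refine_subseq_spec theta k :
  strictly_incr (snd (refine_subseq theta k)) /\
  forall i, d (u (theta (snd (refine_subseq theta k) i)) k) (fst (refine_subseq theta k))
            < / INR (S i).
Proof. unfold refine_subseq. now destruct (constructive_indefinite_description _ _). Qed.

(* nest k refines nest (k - 1), and u (nest k i) k converges as i -> oo at rate 1 / (i + 1) *)
Fixpoint nest (k : nat) : nat -> nat :=
  let prev := match k with O => fun m => m | S k' => nest k' end in
  fun i => prev (snd (refine_subseq prev k) i).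

Definition nest_prev (k : nat) : nat -> nat :=
  match k with O => fun m => m | S k' => nest k' end.

Definition nest_limit (k : nat) : X := fst (refine_subseq (nest_prev k) k).

Lemma nestE k i : nest k i = nest_prev k (snd (refine_subseq (nest_prev k) k) i).
Proof. now destruct k. Qed.

Lemma nest_strictly_incr k : strictly_incr (nest k).
Proof.
  induction k as [|k IH]; intros i; rewrite !nestE.
  - apply refine_subseq_spec.
  - exact (strictly_incr_comp (nest k) _ IH (proj1 (refine_subseq_spec _ _)) i).
Qed.

Lemma nest_refines j k : (j <= k)%nat ->
  exists sigma, strictly_incr sigma /\ forall i, nest k i = nest j (sigma i).
Proof.
  intros Hjk. induction Hjk as [|k Hjk IH].
  - exists (fun i => i). split; [intros i; lia|reflexivity].
  - destruct IH as [sigma [Hsigma Hnest]].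
    exists (fun i => sigma (snd (refine_subseq (nest k) (S k)) i)). split.
    + apply strictly_incr_comp; [exact Hsigma|apply refine_subseq_spec].
    + intros i. rewrite nestE. apply Hnest.
Qed.

Lemma proper_diagonal_extraction :
  exists (q : nat -> X) (theta : nat -> nat -> nat),
    (forall k, strictly_incr (theta k)) /\
    (forall j k i, (j <= k)%nat -> d (u (theta k i) j) (q j) < / INR (S i)).
Proof.
  exists nest_limit, nest. split; [exact nest_strictly_incr|].
  intros j k i Hjk. destruct (nest_refines j k Hjk) as [sigma [Hsigma Hnest]].
  rewrite Hnest, nestE. eapply Rlt_le_trans; [apply refine_subseq_spec|].
  apply Rinv_INR_S_le, strictly_incr_ge, Hsigma.
Qed.

End Diagonal.

Definition nat_floor (t : R) : nat := Z.to_nat (Zfloor t).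

Lemma nat_floor_spec t : 0 <= t -> INR (nat_floor t) <= t < INR (nat_floor t) + 1.
Proof.
  intros Ht. unfold nat_floor.
  assert (H0 : (0 <= Zfloor t)%Z) by (apply Zfloor_lub; exact Ht).
  rewrite INR_IZR_INZ, Z2Nat.id by exact H0. apply Zfloor_bound.
Qed.

Lemma nat_floor_unique n t : INR n <= t < INR n + 1 -> nat_floor t = n.
Proof.
  intros Hn. unfold nat_floor. rewrite INR_IZR_INZ in Hn.
  rewrite (Zfloor_eq _ _ Hn). apply Nat2Z.id.
Qed.

Section RayThroughPoints.
Context {X : Type} {d : X -> X -> R} (Hm : is_metric X d) (Hgeo : geodesic_space X d).
Variables (p : X) (q : nat -> X).
Hypothesis Hq_base : forall k, d p (q k) = INR k.
Hypothesis Hq_step : forall k, d (q k) (q (S k)) <= 1.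

Lemma q_step_eq k : d (q k) (q (S k)) = 1.
Proof.
  pose proof (d_tri Hm p (q k) (q (S k))). rewrite !Hq_base, S_INR in H.
  pose proof (Hq_step k). lra.
Qed.

Lemma q_dist_le i j : d (q i) (q (i + j)) <= INR j.
Proof.
  induction j as [|j IH].
  - rewrite Nat.add_0_r, (d_xx Hm). simpl. lra.
  - rewrite Nat.add_succ_r, S_INR.
    pose proof (d_tri Hm (q i) (q (i + j)) (q (S (i + j)))). pose proof (Hq_step (i + j)). lra.
Qed.

Definition unit_segment (k : nat) : R -> X :=
  proj1_sig (constructive_indefinite_description _ (Hgeo (q k) (q (S k)))).

Lemma unit_segment_spec k : unit_segment k 0 = q k /\ unit_segment k 1 = q (S k) /\
  forall s t, 0 <= s <= 1 -> 0 <= t <= 1 ->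
    d (unit_segment k s) (unit_segment k t) = Rabs (s - t).
Proof.
  unfold unit_segment. destruct (constructive_indefinite_description _ _) as [g Hg]; simpl.
  now rewrite q_step_eq in Hg.
Qed.

Lemma unit_segment_from_start k s : 0 <= s <= 1 -> d (q k) (unit_segment k s) = s.
Proof.
  intros Hs. destruct (unit_segment_spec k) as [H0 [_ Hiso]].
  rewrite <- H0, Hiso by lra. rewrite Rabs_left1 by lra. ring.
Qed.

Lemma unit_segment_to_end k s : 0 <= s <= 1 -> d (unit_segment k s) (q (S k)) = 1 - s.
Proof.
  intros Hs. destruct (unit_segment_spec k) as [_ [H1 Hiso]].
  rewrite <- H1, Hiso by lra. rewrite Rabs_left1 by lra. ring.
Qed.

Definition pl_ray (t : R) : X := unit_segment (nat_floor t) (t - INR (nat_floor t)).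

Lemma pl_ray_nat k : pl_ray (INR k) = q k.
Proof.
  unfold pl_ray. rewrite (nat_floor_unique k (INR k)) by lra.
  rewrite Rminus_diag. apply unit_segment_spec.
Qed.

Lemma pl_ray_lipschitz s t : 0 <= s -> s <= t -> d (pl_ray s) (pl_ray t) <= t - s.
Proof.
  intros Hs Hst. unfold pl_ray.
  set (i := nat_floor s). set (j := nat_floor t).
  pose proof (nat_floor_spec s Hs) as Hi. pose proof (nat_floor_spec t ltac:(lra)) as Hj.
  fold i in Hi. fold j in Hj.
  assert (Hij : (i <= j)%nat) by (apply Nat.lt_succ_r, INR_lt; rewrite S_INR; lra).
  destruct (Nat.eq_dec i j) as [<-|Hne].
  - destruct (unit_segment_spec i) as [_ [_ Hiso]].
    rewrite Hiso, Rabs_left1 by lra. lra.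
  - pose proof (q_dist_le (S i) (j - S i)) as Hmid.
    replace (S i + (j - S i))%nat with j in Hmid by lia.
    rewrite minus_INR, S_INR in Hmid by lia.
    pose proof (unit_segment_to_end i (s - INR i) ltac:(lra)).
    pose proof (unit_segment_from_start j (t - INR j) ltac:(lra)).
    pose proof (d_tri Hm (unit_segment i (s - INR i)) (q (S i)) (q j)).
    pose proof (d_tri Hm (unit_segment i (s - INR i)) (q j) (unit_segment j (t - INR j))).
    lra.
Qed.

Lemma pl_ray_base_ge t : 0 <= t -> t <= d p (pl_ray t).
Proof.
  intros Ht. unfold pl_ray. set (j := nat_floor t).
  pose proof (nat_floor_spec t Ht) as Hj. fold j in Hj.
  pose proof (unit_segment_to_end j (t - INR j) ltac:(lra)).
  pose proof (d_tri Hm p (unit_segment j (t - INR j)) (q (S j))).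
  rewrite Hq_base, S_INR in *. lra.
Qed.

Lemma pl_ray_geod_ray : geod_ray d p pl_ray.
Proof.
  assert (H0 : pl_ray 0 = p).
  { replace 0 with (INR 0) by reflexivity. rewrite pl_ray_nat.
    symmetry. apply (d_eq0 Hm). now rewrite Hq_base. }
  assert (Hle : forall s t, 0 <= s -> s <= t -> d (pl_ray s) (pl_ray t) = t - s).
  { intros s t Hs Hst. apply Rle_antisym; [now apply pl_ray_lipschitz|].
    pose proof (pl_ray_lipschitz 0 s ltac:(lra) Hs). rewrite H0, Rminus_0_r in H.
    pose proof (pl_ray_base_ge t ltac:(lra)).
    pose proof (d_tri Hm p (pl_ray s) (pl_ray t)). lra. }
  split; [exact H0|]. intros s t Hs Ht. destruct (Rle_dec s t).
  - rewrite Hle, Rabs_left1 by lra. ring.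
  - rewrite (d_sym Hm), Hle, Rabs_right by lra. ring.
Qed.

End RayThroughPoints.

Lemma geod_ray_through_points {X : Type} {d : X -> X -> R} (p : X) (q : nat -> X) :
  is_metric X d -> geodesic_space X d ->
  (forall k, d p (q k) = INR k) -> (forall k, d (q k) (q (S k)) <= 1) ->
  exists g, geod_ray d p g /\ forall k, g (INR k) = q k.
Proof.
  intros Hm Hgeo Hbase Hstep. exists (pl_ray Hgeo q). split.
  - exact (pl_ray_geod_ray Hm Hgeo p q Hbase Hstep).
  - exact (pl_ray_nat Hm Hgeo p q Hbase Hstep).
Qed.

Section Hyperbolic.
Context {X : Type} {d : X -> X -> R} (Hm : is_metric X d) (delta : R).
Hypothesis Hhyp : forall x y z p, gprod d p x z >= Rmin (gprod d p x y) (gprod d p y z) - delta.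

Lemma hyp_delta_ge0 (p : X) : 0 <= delta.
Proof.
  pose proof (Hhyp p p p p) as H. rewrite (gprod_xx Hm), (d_xx Hm), Rmin_left in H; lra.
Qed.

Lemma hyp_gprod_lt p x y z M :
  M < gprod d p x y -> M < gprod d p y z -> M - delta < gprod d p x z.
Proof.
  intros Hxy Hyz. pose proof (Hhyp x y z p).
  pose proof (Rmin_glb_lt _ _ _ Hxy Hyz). lra.
Qed.

Lemma ray_base p g t : geod_ray d p g -> 0 <= t -> d p (g t) = t.
Proof.
  intros [H0 Hiso] Ht. rewrite <- H0 at 1. rewrite Hiso, Rabs_left1 by lra. ring.
Qed.

Lemma gprod_ray_equiv p g g' t M :
  geod_ray d p g -> geod_ray d p g' -> 0 <= t -> d (g t) (g' t) <= M ->
  t - M / 2 <= gprod d p (g t) (g' t).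
Proof.
  intros Hg Hg' Ht HM. unfold gprod. rewrite (ray_base p g), (ray_base p g') by assumption. lra.
Qed.

Lemma gromov_equiv_of_ray_equiv p a b ga gb :
  geod_ray d p ga -> geod_ray d p gb -> ray_equiv d ga gb ->
  gprod_to_infty d p a (fun k => ga (INR k)) -> gprod_to_infty d p b (fun k => gb (INR k)) ->
  gromov_equiv d p a b.
Proof.
  intros Hga Hgb [M0 HM0] Ha Hb M. set (T := M + 2 * delta).
  pose proof (hyp_delta_ge0 p).
  destruct (Ha T) as [Na HNa]. destruct (Hb T) as [Nb HNb].
  destruct (nat_above (T + M0 / 2)) as [K HK].
  exists (Nat.max Na Nb). intros n Hn. set (k := Nat.max K n).
  assert (HkK : INR K <= INR k) by (apply le_INR; lia).
  pose proof (gprod_ray_equiv p ga gb (INR k) M0 Hga Hgb (pos_INR k) (HM0 _ (pos_INR k))).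
  pose proof (HNa n k ltac:(lia) ltac:(lia)) as Hak.
  pose proof (HNb n k ltac:(lia) ltac:(lia)) as Hbk. rewrite (gprod_sym Hm) in Hbk.
  pose proof (hyp_gprod_lt p (ga (INR k)) (gb (INR k)) (b n) T ltac:(lra) Hbk).
  pose proof (hyp_gprod_lt p (a n) (ga (INR k)) (b n) (T - delta) ltac:(lra) H1).
  unfold T in *. lra.
Qed.

End Hyperbolic.

Section GromovSequenceRay.
Context {X : Type} {d : X -> X -> R} (Hm : is_metric X d).
Hypotheses (Hprop : proper_space X d) (Hgeo : geodesic_space X d).
Variables (p : X) (delta : R).
Hypothesis Hhyp : forall x y z p, gprod d p x z >= Rmin (gprod d p x y) (gprod d p y z) - delta.
Variable a : nat -> X.
Hypothesis Ha : gromov_seq d p a.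

Definition geod_to (m : nat) : R -> X :=
  proj1_sig (constructive_indefinite_description _ (Hgeo p (a m))).

Lemma geod_to_spec m : geod_to m 0 = p /\ geod_to m (d p (a m)) = a m /\
  forall s t, 0 <= s <= d p (a m) -> 0 <= t <= d p (a m) ->
    d (geod_to m s) (geod_to m t) = Rabs (s - t).
Proof. unfold geod_to. now destruct (constructive_indefinite_description _ _) as [g Hg]. Qed.

Definition stopped_geod (m : nat) (t : R) : X := geod_to m (Rmin t (d p (a m))).

Lemma stopped_geod_iso m s t : 0 <= s -> 0 <= t ->
  d (stopped_geod m s) (stopped_geod m t) = Rabs (Rmin s (d p (a m)) - Rmin t (d p (a m))).
Proof.
  intros Hs Ht. destruct (geod_to_spec m) as [_ [_ Hiso]].
  pose proof (d_ge0 Hm p (a m)). apply Hiso; unfold Rmin; destruct Rle_dec; lra.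
Qed.

Lemma stopped_geod_0 m : stopped_geod m 0 = p.
Proof. unfold stopped_geod. rewrite Rmin_left by apply (d_ge0 Hm). apply geod_to_spec. Qed.

Lemma stopped_geod_end m t : d p (a m) <= t -> stopped_geod m t = a m.
Proof. intros Ht. unfold stopped_geod. rewrite Rmin_right by exact Ht. apply geod_to_spec. Qed.

Lemma stopped_geod_base m t : 0 <= t -> d p (stopped_geod m t) = Rmin t (d p (a m)).
Proof.
  intros Ht. rewrite <- (stopped_geod_0 m) at 1. rewrite stopped_geod_iso by lra.
  rewrite Rmin_left by apply (d_ge0 Hm).
  pose proof (d_ge0 Hm p (a m)). unfold Rmin, Rabs. destruct Rle_dec, Rcase_abs; lra.
Qed.

Lemma stopped_geod_lipschitz m s t : 0 <= s -> 0 <= t ->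
  d (stopped_geod m s) (stopped_geod m t) <= Rabs (s - t).
Proof.
  intros Hs Ht. rewrite stopped_geod_iso by assumption.
  unfold Rmin, Rabs. repeat destruct Rle_dec; repeat destruct Rcase_abs; lra.
Qed.

Lemma gprod_stopped_geod m t : 0 <= t -> gprod d p (a m) (stopped_geod m t) = Rmin t (d p (a m)).
Proof.
  intros Ht. pose proof (d_ge0 Hm p (a m)).
  unfold gprod. rewrite stopped_geod_base by exact Ht.
  rewrite <- (stopped_geod_end m (d p (a m))) at 3 by lra.
  rewrite stopped_geod_iso by lra. rewrite (Rmin_right (d p (a m))) by lra.
  unfold Rmin, Rabs. destruct Rle_dec, Rcase_abs; lra.
Qed.

Lemma gromov_seq_base_unbounded M : exists N, forall m, (N <= m)%nat -> M < d p (a m).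
Proof.
  destruct (Ha M) as [N HN]. exists N. intros m Hmn.
  rewrite <- (gprod_xx Hm). now apply HN.
Qed.

Section Limits.
Variables (q : nat -> X) (theta : nat -> nat -> nat).
Hypothesis Htheta : forall k, strictly_incr (theta k).
Hypothesis Hclose : forall j k i, (j <= k)%nat ->
  d (stopped_geod (theta k i) (INR j)) (q j) < / INR (S i).

Lemma limits_base k : d p (q k) = INR k.
Proof.
  destruct (gromov_seq_base_unbounded (INR k)) as [N HN].
  enough (Habs : Rabs (d p (q k) - INR k) <= 0)
    by (apply Rabs_le_between in Habs; lra).
  apply (le_0_of_le_Rinv_INR_S _ N). intros i Hi.
  set (m := theta k i). pose proof (Hclose k k i (le_n k)) as Hmk. fold m in Hmk.
  assert (Hm_base : d p (stopped_geod m (INR k)) = INR k).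
  { rewrite stopped_geod_base by apply pos_INR. apply Rmin_left. left. apply HN.
    exact (Nat.le_trans _ _ _ Hi (strictly_incr_ge _ (Htheta k) i)). }
  pose proof (d_rev_tri Hm p (q k) (stopped_geod m (INR k))) as Hrev.
  rewrite Hm_base, (d_sym Hm (q k)) in Hrev. lra.
Qed.

Lemma limits_step k : d (q k) (q (S k)) <= 1.
Proof.
  enough (Hle : (d (q k) (q (S k)) - 1) / 2 <= 0) by lra.
  apply (le_0_of_le_Rinv_INR_S _ 0). intros i _.
  set (m := theta (S k) i).
  pose proof (Hclose k (S k) i ltac:(lia)) as H1. pose proof (Hclose (S k) (S k) i (le_n _)) as H2.
  fold m in H1, H2.
  assert (Hlip : d (stopped_geod m (INR k)) (stopped_geod m (INR (S k))) <= 1).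
  { eapply Rle_trans; [apply stopped_geod_lipschitz; apply pos_INR|].
    rewrite S_INR, Rabs_left1 by lra. lra. }
  pose proof (d_tri Hm (q k) (stopped_geod m (INR k)) (q (S k))).
  pose proof (d_tri Hm (stopped_geod m (INR k)) (stopped_geod m (INR (S k))) (q (S k))).
  rewrite (d_sym Hm (q k) (stopped_geod m (INR k))) in *. lra.
Qed.

Lemma limits_gprod_to_infty : gprod_to_infty d p a q.
Proof.
  intros M. destruct (Ha (M + delta + 1)) as [N HN].
  destruct (nat_above (M + delta + 1)) as [K HK].
  exists (Nat.max N K). intros n k Hn Hk.
  set (m := theta k N).
  assert (HmN : (N <= m)%nat) by apply strictly_incr_ge, Htheta.
  pose proof (Hclose k k N (le_n k)) as Hmk. fold m in Hmk.
  pose proof (Rinv_INR_S_le 0 N ltac:(lia)) as Hr.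
  change (INR 1) with 1 in Hr. rewrite Rinv_1 in Hr.
  assert (Hk' : M + delta + 1 < INR k) by (pose proof (le_INR K k ltac:(lia)); lra).
  assert (Hmm : M + delta + 1 < gprod d p (a m) (stopped_geod m (INR k))).
  { rewrite gprod_stopped_geod by apply pos_INR. apply Rmin_glb_lt; [exact Hk'|].
    rewrite <- (gprod_xx Hm). apply HN; lia. }
  pose proof (hyp_gprod_lt delta Hhyp p (a n) (a m) (stopped_geod m (INR k)) _
                (HN n m ltac:(lia) HmN) Hmm).
  pose proof (gprod_lipschitz_r Hm p (a n) (q k) (stopped_geod m (INR k))).
  rewrite (d_sym Hm) in Hmk. lra.
Qed.

End Limits.

Lemma gromov_seq_ray : exists g, geod_ray d p g /\ gprod_to_infty d p a (fun k => g (INR k)).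
Proof.
  destruct (proper_diagonal_extraction Hm Hprop p (fun m k => stopped_geod m (INR k)) INR)
    as [q [theta [Htheta Hclose]]].
  { intros m k. rewrite stopped_geod_base by apply pos_INR. apply Rmin_l. }
  destruct (geod_ray_through_points p q Hm Hgeo (limits_base q theta Htheta Hclose)
              (limits_step q theta Hclose)) as [g [Hg Hgq]].
  exists g. split; [exact Hg|]. intros M.
  destruct (limits_gprod_to_infty q theta Htheta Hclose M) as [N HN].
  exists N. intros n k Hn Hk. rewrite Hgq. now apply HN.
Qed.

End GromovSequenceRay.

Theorem lemma3p5 (X : Type) (d : X -> X -> R) (delta : R) (p : X) (eps : R) :
  gromov_hyperbolic d delta -> 0 < eps -> Phi_bijective d p eps ->
  forall (c : nat -> X), eps_bdry_point d p eps c ->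
  forall (xs ys : nat -> X), conv_to d p eps xs c -> conv_to d p eps ys c ->
  forall (phi psi : nat -> nat), strictly_incr phi -> strictly_incr psi ->
  gromov_seq d p (fun n => xs (phi n)) -> gromov_seq d p (fun n => ys (psi n)) ->
  gromov_equiv d p (fun n => xs (phi n)) (fun n => ys (psi n)).
Proof.
  intros [Hm [_ [Hprop [Hgeo Hhyp]]]] Heps [Hinj _] c Hc xs ys Hx Hy phi psi Hphi Hpsi Ga Gb.
  destruct (gromov_seq_ray Hm Hprop Hgeo p delta Hhyp _ Ga) as [ga [Hga Ha]].
  destruct (gromov_seq_ray Hm Hprop Hgeo p delta Hhyp _ Gb) as [gb [Hgb Hb]].
  assert (Hxa : conv_to d p eps (fun n => xs (phi n)) c)
    by exact (is_lim_seq_subseq _ _ _ (eventually_subseq _ Hphi) Hx).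
  assert (Hyb : conv_to d p eps (fun n => ys (psi n)) c)
    by exact (is_lim_seq_subseq _ _ _ (eventually_subseq _ Hpsi) Hy).
  apply (gromov_equiv_of_ray_equiv Hm delta Hhyp p _ _ ga gb Hga Hgb); [|exact Ha|exact Hb].
  apply (Hinj ga gb c Hga Hgb Hc).
  - exact (conv_to_gprod_to_infty Hm Hgeo p eps c _ _ Heps (proj1 Hc) Hxa Ha).
  - exact (conv_to_gprod_to_infty Hm Hgeo p eps c _ _ Heps (proj1 Hc) Hyb Hb).
Qed.
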